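(* Let the problem, the cone $\mathcal{C}$ and the complexity be as in the context, and assume $n_0\ge1$. Assume $$R=\sup_{k\in\mathbb{N}}\frac{\lambda_{n_{k-1}}}{\lambda_{n_k}}<\infty.$$ Let $\varepsilon,\rho>0$. Then for every $j\in\mathbb{N}$ satisfying $$\Big[\frac{(a+1)^2R^2}{(a-1)^2}+1\Big]\sum_{k=0}^{j}\frac{b^{2(k-j)}}{\lambda_{n_k}^2}<\frac{\rho^2}{\varepsilon^2},$$ one has $\mathrm{comp}(\mathcal{A}(\mathcal{C}),\varepsilon,\rho)\ge n_j$. In particular, $\mathrm{comp}(\mathcal{A}(\mathcal{C}),\varepsilon,\rho)\ge n_{j^*}$, where $j^*$ is the largest such $j$.
   Context: Let $\mathcal{F}$ and $\mathcal{G}$ be separable Hilbert spaces with orthonormal bases $(u_i)_{i\in\mathbb{N}}$ and $(v_i)_{i\in\mathbb{N}}$. Write $f=\sum_i\widehat f_iu_i$ with $\|f\|_{\mathcal{F}}=\|(\widehat f_i)_i\|_{\ell^2}$, and similarly for $\mathcal{G}$. Let $S:\mathcal{F}\to\mathcal{G}$ be the linear operator $S(f)=\sum_i\lambda_i\widehat f_iv_i$, where $\lambda_1\ge\lambda_2\ge\cdots>0$ and $\lambda_i\to0$. Let $\mathcal{B}_\rho=\{f:\|f\|_{\mathcal{F}}\le\rho\}$. For $\mathcal{H}\subseteq\mathcal{F}$, $\mathcal{A}(\mathcal{H})$ is the set of deterministic algorithms $A:\mathcal{H}\times(0,\infty)\to\mathcal{G}$ with $\|S(f)-A(f,\varepsilon)\|_{\mathcal{G}}\le\varepsilon$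 for all $f\in\mathcal{H}$ and all $\varepsilon>0$. Such an algorithm adaptively samples finitely many bounded linear functionals of $f$, and its output depends on $f$ only through those values. Costs are defined as follows: - $\mathrm{cost}(A,f,\varepsilon)$ is the number of functional values used to compute $A(f,\varepsilon)$; - $\mathrm{cost}(A,\mathcal{H},\varepsilon,\rho)=\sup\{\mathrm{cost}(A,f,\varepsilon):f\in\mathcal{H}\cap\mathcal{B}_\rho\}$; - $\mathrm{comp}(\mathcal{A}(\mathcal{H}),\varepsilon,\rho)=\min_{A\in\mathcal{A}(\mathcal{H})}\mathrm{cost}(A,\mathcal{H},\varepsilon,\rho)$. Let $n_0<n_1<\cdots$ be a strictly increasing, unbounded sequence of non-negative integers. For $j\in\mathbb{N}=\{1,2,\dots\}$ let $\sigma_j(f)=\|(\lambda_i\widehat f_i)_{i=n_{j-1}+1}^{n_j}\|_{\ell^2}$. Fix $0<b<1<a$ and let $\mathcal{C}=\{f\in\mathcal{F}:\sigma_{j+r}(f)\le ab^r\sigma_j(f)\ \forall j,r\in\mathbb{N}\}$. *)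

From Stdlib Require Import Reals ZArith List.
From Coquelicot Require Import Coquelicot.
Open Scope R_scope.

(* Coordinates are 0-indexed: a sequence x : nat -> R stands for the vector
   whose coefficient on the basis element u_(i+1) (resp. v_(i+1)) is x i.
   Likewise lam i stands for lambda_(i+1). *)

(** The Hilbert spaces F and G, identified with l^2 via their orthonormal bases. *)
Definition l2 (x : nat -> R) : Prop := ex_series (fun i => (x i) ^ 2).
Definition l2norm (x : nat -> R) : R := sqrt (Series (fun i => (x i) ^ 2)).

Definition Sop (lam : nat -> R) (f : nat -> R) : nat -> R := fun i => lam i * f i.

Definition bounded_linear_functional (L : (nat -> R) -> R) : Prop :=
  (forall (f g : nat -> R) (c : R), l2 f -> l2 g ->
      L (fun i => c * f i + g i) = c * L f + L g) /\
  (exists C : R, 0 <= C /\ forall f, l2 f -> Rabs (L f) <= C * l2norm f).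

(** A deterministic adaptive algorithm: for every tolerance eps, a strategy
    which, given the list of functional values observed so far, either
    requests one more bounded linear functional ([Some L]) or stops ([None]);
    the output is a function of the observed values only. *)
Record strategy := Strategy {
  next : list R -> option ((nat -> R) -> R);
  out  : list R -> (nat -> R)
}.
Definition algorithm := R -> strategy.

Fixpoint data (s : strategy) (f : nat -> R) (k : nat) : list R :=
  match k with
  | O => nil
  | S k' => let d := data s f k' in
            match next s d with
            | Some L => d ++ (L f :: nil)
            | None => d
            end
  end.

(** [stop_time s f k]: the strategy stops on f after exactly k functional
    values, i.e. cost(A,f,eps) = k. *)
Definition stop_time (s : strategy) (f : nat -> R) (k : nat) : Prop :=
  next s (data s f k) = None /\
  forall k', (k' < k)%nat -> next s (data s f k') <> None.

Definition output (s : strategy) (f : nat -> R) (k : nat) : nat -> R :=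
  out s (data s f k).

Definition in_alg_class (lam : nat -> R) (H : (nat -> R) -> Prop)
    (A : algorithm) : Prop :=
  forall (eps : R) (f : nat -> R), 0 < eps -> H f ->
    exists k : nat, stop_time (A eps) f k /\
      (forall k', (k' < k)%nat -> forall L,
          next (A eps) (data (A eps) f k') = Some L ->
          bounded_linear_functional L) /\
      l2 (fun i => Sop lam f i - output (A eps) f k i) /\
      l2norm (fun i => Sop lam f i - output (A eps) f k i) <= eps.

(** cost(A, H, eps, rho) >= N  (a supremum of naturals, possibly infinite). *)
Definition cost_ge (A : algorithm) (H : (nat -> R) -> Prop)
    (eps rho : R) (N : nat) : Prop :=
  exists f : nat -> R, H f /\ l2 f /\ l2norm f <= rho /\
    forall k, stop_time (A eps) f k -> (N <= k)%nat.

(** comp(A(H), eps, rho) >= N : the minimum over A in A(H) of the cost. *)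
Definition comp_ge (lam : nat -> R) (H : (nat -> R) -> Prop)
    (eps rho : R) (N : nat) : Prop :=
  forall A : algorithm, in_alg_class lam H A -> cost_ge A H eps rho N.

(** sigma_j(f) = || (lambda_i f_i)_{i = n_(j-1)+1 .. n_j} ||  (1-indexed i),
    i.e. 0-indexed coordinates n_(j-1) .. n_j - 1. *)
Definition sigma (lam : nat -> R) (n : nat -> nat) (f : nat -> R) (j : nat) : R :=
  sqrt (sum_n_m (fun i => (lam i * f i) ^ 2) (n (j - 1)%nat) (n j - 1)%nat).

Definition cone (lam : nat -> R) (n : nat -> nat) (a b : R) (f : nat -> R) : Prop :=
  l2 f /\
  forall j r : nat, (1 <= j)%nat -> (1 <= r)%nat ->
    sigma lam n f (j + r) <= a * b ^ r * sigma lam n f j.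

(** lambda_(n_k) in the 1-indexed convention of the paper. *)
Definition lamN (lam : nat -> R) (n : nat -> nat) (k : nat) : R := lam (n k - 1)%nat.

From Pilot Require Import Defs.
From Stdlib Require Import Reals ZArith List Lia Lra Psatz Classical FunctionalExtensionality.
From Coquelicot Require Import Coquelicot.
Open Scope R_scope.

(* An adversary argument.  The center f puts the mass D b^(K-j) on the first
   coordinate of each block K <= j, with D = E (a+1)/(a-1).  A perturbation h of
   the first n_j coordinates with ||S h|| <= E moves every sigma_K(f) by at most E,
   and (a-1) D = (a+1) E is exactly what keeps f + h in the cone.  An algorithm
   using fewer than n_j functionals on f leaves a direction h in their common
   kernel, which we scale to ||S h|| = E > eps; it cannot distinguish f + h from
   f - h, so one output would have to be eps-close to both S(f + h) and
   S(f - h), which are 2E apart.  The norm bound ||f||^2 <= D^2 sum_K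
   b^(2(K-j)) / lambda_(n_K)^2 holds because lambda at the start of block K is
   at least lambda_(n_K). *)

Definition supported_below (N : nat) (x : nat -> R) : Prop :=
  forall i, (N <= i)%nat -> x i = 0.

Lemma sum_n_m_nonneg (a : nat -> R) lo hi :
  (forall i, 0 <= a i) -> 0 <= sum_n_m a lo hi.
Proof.
  intros Ha. rewrite <- (Rmult_0_r (INR (S hi - lo))), <- sum_n_m_const.
  apply sum_n_m_le. exact Ha.
Qed.

Lemma sum_n_m_le_sum_n (a : nat -> R) lo hi m :
  (forall i, 0 <= a i) -> (hi <= m)%nat -> sum_n_m a lo hi <= sum_n a m.
Proof.
  intros Ha Hm. induction Hm as [|m _ IH].
  - destruct (le_lt_dec lo hi) as [Hle|Hlt].
    + destruct lo as [|lo]; [apply Rle_refl|].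
      unfold sum_n. rewrite (sum_n_m_Chasles a 0 lo hi) by lia.
      pose proof (sum_n_m_nonneg a 0 lo Ha). change (plus ?x ?y) with (x + y). lra.
    + rewrite sum_n_m_zero by lia. apply sum_n_m_nonneg, Ha.
  - rewrite sum_Sn. change (plus ?x ?y) with (x + y). specialize (Ha (S m)). lra.
Qed.

Lemma sum_n_m_le_Series (a : nat -> R) lo hi :
  (forall i, 0 <= a i) -> ex_series a -> sum_n_m a lo hi <= Series a.
Proof.
  intros Ha Hex. eapply Rle_trans; [apply (sum_n_m_le_sum_n a lo hi hi Ha), le_n|].
  apply (is_lim_seq_incr_compare (sum_n a)); [apply Series_correct, Hex|].
  intros m. rewrite sum_Sn. change (plus ?x ?y) with (x + y). specialize (Ha (S m)). lra.
Qed.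

Lemma sum_n_pos_of_first (a : nat -> R) m :
  (forall i, 0 <= a i) -> 0 < a 0%nat -> 0 < sum_n a m.
Proof.
  intros Ha Ha0. apply Rlt_le_trans with (sum_n_m a 0 0).
  - rewrite sum_n_n. exact Ha0.
  - apply sum_n_m_le_sum_n; [exact Ha|lia].
Qed.

Lemma is_series_supported (N : nat) (a : nat -> R) :
  supported_below N a -> is_series a (sum_n a (N - 1)).
Proof.
  intros Ha. apply filterlim_ext_loc with (fun _ => sum_n a (N - 1));
    [|apply filterlim_const].
  exists (N - 1)%nat. intros m Hm. induction Hm as [|m Hm IH]; [reflexivity|].
  rewrite sum_Sn, <- IH, (Ha (S m)) by lia. change (plus ?x ?y) with (x + y).
  symmetry. apply Rplus_0_r.
Qed.

Lemma Series_supported (N : nat) (a : nat -> R) :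
  supported_below N a -> Series a = sum_n a (N - 1).
Proof. intros Ha. apply is_series_unique, is_series_supported, Ha. Qed.

Lemma l2_supported (N : nat) (x : nat -> R) : supported_below N x -> l2 x.
Proof.
  intros Hx. eexists. apply (is_series_supported N).
  intros i Hi. rewrite Hx by exact Hi. ring.
Qed.

Lemma l2norm_sqr (x : nat -> R) : l2 x -> l2norm x ^ 2 = Series (fun i => x i ^ 2).
Proof.
  intros Hx. unfold l2norm. rewrite pow2_sqrt; [reflexivity|].
  apply Rle_trans with (sum_n_m (fun i => x i ^ 2) 0 0).
  - rewrite sum_n_n. apply pow2_ge_0.
  - apply sum_n_m_le_Series; [intros; apply pow2_ge_0|exact Hx].
Qed.

Lemma sum_n_m_sqr_le_l2norm (x : nat -> R) lo hi :
  l2 x -> sum_n_m (fun i => x i ^ 2) lo hi <= l2norm x ^ 2.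
Proof.
  intros Hx. rewrite l2norm_sqr by exact Hx.
  apply sum_n_m_le_Series; [intros; apply pow2_ge_0|exact Hx].
Qed.

Lemma l2norm_pos (x : nat -> R) i : l2 x -> x i <> 0 -> 0 < l2norm x.
Proof.
  intros Hx Hi. apply sqrt_lt_R0.
  apply Rlt_le_trans with (sum_n_m (fun i => x i ^ 2) i i).
  - rewrite sum_n_n. apply pow2_gt_0, Hi.
  - apply sum_n_m_le_Series; [intros; apply pow2_ge_0|exact Hx].
Qed.

Lemma l2norm_scal (c : R) (x : nat -> R) :
  l2norm (fun i => c * x i) = Rabs c * l2norm x.
Proof.
  unfold l2norm.
  rewrite (Series_ext _ (fun i => c ^ 2 * x i ^ 2)) by (intros; ring).
  rewrite Series_scal_l, <- sqrt_Rsqr_abs, <- sqrt_mult_alt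
    by (apply Rle_0_sqr).
  unfold Rsqr. f_equal. ring.
Qed.

Lemma l2norm_le_sqr (x : nat -> R) (eps : R) :
  l2 x -> l2norm x <= eps -> Series (fun i => x i ^ 2) <= eps ^ 2.
Proof.
  intros Hx Hle. rewrite <- l2norm_sqr by exact Hx.
  apply pow_incr. split; [apply sqrt_pos|exact Hle].
Qed.

Lemma l2norm_half_sub (x y : nat -> R) (eps : R) :
  l2 x -> l2 y -> l2norm x <= eps -> l2norm y <= eps ->
  l2norm (fun i => (x i - y i) / 2) <= eps.
Proof.
  intros Hx Hy Hxe Hye.
  assert (Heps : 0 <= eps) by (eapply Rle_trans; [apply sqrt_pos|exact Hxe]).
  assert (Hpar : 2 * Series (fun i => ((x i - y i) / 2) ^ 2)
                 <= Series (fun i => x i ^ 2) + Series (fun i => y i ^ 2)).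
  { rewrite <- Series_scal_l, <- Series_plus by assumption.
    apply Series_le; [|exact (ex_series_plus _ _ Hx Hy)].
    intros i. split; [pose proof (pow2_ge_0 ((x i - y i) / 2)); lra|].
    pose proof (pow2_ge_0 (x i + y i)). nra. }
  pose proof (l2norm_le_sqr x eps Hx Hxe).
  pose proof (l2norm_le_sqr y eps Hy Hye).
  unfold l2norm. rewrite <- (sqrt_pow2 eps Heps). apply sqrt_le_1_alt. lra.
Qed.

Lemma supported_below_le (N M : nat) (x : nat -> R) :
  (N <= M)%nat -> supported_below N x -> supported_below M x.
Proof. intros HNM Hx i Hi. apply Hx. lia. Qed.

Definition linear_below (N : nat) (L : (nat -> R) -> R) : Prop :=
  forall x y c, supported_below N x -> supported_below N y ->
    L (fun i => c * x i + y i) = c * L x + L y.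

Lemma linear_below_scal (N : nat) (L : (nat -> R) -> R) (c : R) (x : nat -> R) :
  linear_below N L -> supported_below N x -> L (fun i => c * x i) = c * L x.
Proof.
  intros HL Hx.
  assert (H0 : supported_below N (fun _ => 0)) by (intros i _; reflexivity).
  assert (HL0 : L (fun _ => 0) = 0).
  { pose proof (HL _ _ 1 H0 H0) as H.
    rewrite (functional_extensionality (fun i => 1 * 0 + 0) (fun _ => 0)) in H
      by (intros; ring).
    lra. }
  rewrite <- (Rplus_0_r (c * L x)), <- HL0, <- HL by assumption.
  f_equal. apply functional_extensionality. intros. ring.
Qed.

Lemma linear_below_add_kernel (N : nat) (L : (nat -> R) -> R) (x h : nat -> R) :
  linear_below N L -> supported_below N x -> supported_below N h -> L h = 0 ->
  L (fun i => x i + h i) = L x.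
Proof.
  intros HL Hx Hh Hh0.
  rewrite (functional_extensionality (fun i => x i + h i) (fun i => 1 * h i + x i))
    by (intros; ring).
  rewrite HL by assumption. rewrite Hh0. ring.
Qed.

Definition unit_vec (p : nat) : nat -> R := fun i => if Nat.eq_dec i p then 1 else 0.

Lemma unit_vec_supported (p : nat) : supported_below (S p) (unit_vec p).
Proof. intros i Hi. unfold unit_vec. destruct (Nat.eq_dec i p); [lia|reflexivity]. Qed.

Lemma unit_vec_below (p i : nat) : (i < p)%nat -> unit_vec p i = 0.
Proof. intros Hi. unfold unit_vec. destruct (Nat.eq_dec i p); [lia|reflexivity]. Qed.

Lemma unit_vec_at (p : nat) : unit_vec p p = 1.
Proof. unfold unit_vec. destruct (Nat.eq_dec p p); [reflexivity|congruence]. Qed.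

Section KernelProjection.
Variables (N : nat) (Lp : (nat -> R) -> R).
Hypothesis Lp_lin : linear_below (S N) Lp.

(* projection onto the kernel of [Lp] along the last coordinate vector, up to the
   factor [Lp (unit_vec N)] *)
Definition kernel_proj (c : nat -> R) : nat -> R :=
  fun i => Lp (unit_vec N) * c i + (- Lp c) * unit_vec N i.

Lemma kernel_proj_supported (c : nat -> R) :
  supported_below N c -> supported_below (S N) (kernel_proj c).
Proof.
  intros Hc i Hi. unfold kernel_proj. rewrite Hc, unit_vec_supported by lia. ring.
Qed.

Lemma kernel_proj_below (c : nat -> R) i :
  (i < N)%nat -> kernel_proj c i = Lp (unit_vec N) * c i.
Proof. intros Hi. unfold kernel_proj. rewrite unit_vec_below by exact Hi. ring. Qed.

Lemma kernel_proj_annihilated (c : nat -> R) :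
  supported_below N c -> Lp (kernel_proj c) = 0.
Proof.
  intros Hc. pose proof (unit_vec_supported N) as He.
  assert (Hc' : supported_below (S N) c) by (apply (supported_below_le N); auto).
  unfold kernel_proj. rewrite Lp_lin, (linear_below_scal (S N)) by
    (auto; intros i Hi; rewrite He by exact Hi; ring).
  ring.
Qed.

Lemma linear_below_kernel_proj (L : (nat -> R) -> R) :
  linear_below (S N) L -> linear_below N (fun c => L (kernel_proj c)).
Proof.
  intros HL x y t Hx Hy.
  replace (kernel_proj (fun i => t * x i + y i))
    with (fun i => t * kernel_proj x i + kernel_proj y i).
  - apply HL; apply kernel_proj_supported; assumption.
  - unfold kernel_proj. rewrite Lp_lin by (apply (supported_below_le N); auto).
    apply functional_extensionality. intros. ring.
Qed.

End KernelProjection.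

Lemma common_kernel_nontrivial (N : nat) (Ls : list ((nat -> R) -> R)) :
  (length Ls < N)%nat -> List.Forall (linear_below N) Ls ->
  exists g, supported_below N g /\ (exists i, g i <> 0) /\
            List.Forall (fun L => L g = 0) Ls.
Proof.
  revert Ls. induction N as [|N IH]; intros Ls Hlen Hlin; [lia|].
  destruct (classic (List.Forall (fun L => L (unit_vec N) = 0) Ls)) as [Hall|Hnot].
  { exists (unit_vec N). split; [apply unit_vec_supported|split; [|exact Hall]].
    exists N. rewrite unit_vec_at. lra. }
  apply Exists_Forall_neg in Hnot; [|intros; apply classic].
  apply Exists_exists in Hnot as [Lp [HLp HLpe]].
  apply in_split in HLp as [l1 [l2 ->]].
  apply Forall_app in Hlin as [Hlin1 Hlin2].
  apply Forall_cons_iff in Hlin2 as [HLlin Hlin2].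
  destruct (IH (map (fun L c => L (kernel_proj N Lp c)) (l1 ++ l2)))
    as [c [Hc [[i Hci] Hker]]].
  - rewrite length_map, length_app. rewrite length_app in Hlen. simpl in Hlen. lia.
  - apply Forall_map, Forall_app.
    split; eapply Forall_impl; eauto using linear_below_kernel_proj.
  - apply Forall_map, Forall_app in Hker as [Hker1 Hker2].
    exists (kernel_proj N Lp c). split; [|split].
    + apply kernel_proj_supported, Hc.
    + exists i. assert (Hi : (i < N)%nat) by (destruct (le_lt_dec N i); auto; exfalso; auto).
      rewrite kernel_proj_below by exact Hi. apply Rmult_integral_contrapositive. auto.
    + apply Forall_app. split; [exact Hker1|].
      apply Forall_cons; [apply kernel_proj_annihilated; auto|exact Hker2].
Qed.

Section Indistinguishable.
Variables (s : strategy) (f h : nat -> R) (k : nat).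
Hypothesis queries_agree : forall i, (i < k)%nat -> forall L,
  next s (data s f i) = Some L -> L h = L f.

Lemma data_indistinguishable i : (i <= k)%nat -> data s h i = data s f i.
Proof.
  induction i as [|i IH]; intros Hi; [reflexivity|]. simpl.
  rewrite IH by lia. destruct (next s (data s f i)) as [L|] eqn:EL; [|reflexivity].
  rewrite (queries_agree i) by (lia || exact EL). reflexivity.
Qed.

Lemma stop_time_indistinguishable : stop_time s f k -> stop_time s h k.
Proof.
  intros [Hstop Hrun]. split.
  - rewrite data_indistinguishable by lia. exact Hstop.
  - intros k' Hk'. rewrite data_indistinguishable by lia. exact (Hrun k' Hk').
Qed.

End Indistinguishable.

Lemma stop_time_unique (s : strategy) (f : nat -> R) (k1 k2 : nat) :
  stop_time s f k1 -> stop_time s f k2 -> k1 = k2.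
Proof.
  intros [H1 H1'] [H2 H2']. destruct (lt_eq_lt_dec k1 k2) as [[H|H]|H]; auto.
  - exfalso. exact (H2' k1 H H1).
  - exfalso. exact (H1' k2 H H2).
Qed.

Lemma accurate_on_indistinguishable (lam : nat -> R) (H : (nat -> R) -> Prop)
    (A : algorithm) (eps : R) (f h : nat -> R) (k : nat) :
  in_alg_class lam H A -> 0 < eps -> H h -> stop_time (A eps) f k ->
  (forall i, (i < k)%nat -> forall L,
     next (A eps) (data (A eps) f i) = Some L -> L h = L f) ->
  l2 (fun i => Sop lam h i - output (A eps) f k i) /\
  l2norm (fun i => Sop lam h i - output (A eps) f k i) <= eps.
Proof.
  intros HA Heps Hh Hf Hagree.
  destruct (HA eps h Heps Hh) as [k' [Hh' [_ Hacc]]].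
  pose proof (stop_time_indistinguishable _ _ _ _ Hagree Hf) as Hhk.
  rewrite (stop_time_unique _ _ _ _ Hh' Hhk) in Hacc.
  unfold output in *. rewrite (data_indistinguishable _ f h k Hagree k (le_n k)) in Hacc.
  exact Hacc.
Qed.

Lemma accurate_on_kernel_shift (lam : nat -> R) (H : (nat -> R) -> Prop)
    (A : algorithm) (eps : R) (f g : nat -> R) (N k : nat) (t : R) :
  in_alg_class lam H A -> 0 < eps -> supported_below N f -> supported_below N g ->
  stop_time (A eps) f k ->
  (forall i, (i < k)%nat -> forall L,
     next (A eps) (data (A eps) f i) = Some L -> linear_below N L /\ L g = 0) ->
  H (fun i => f i + t * g i) ->
  l2 (fun i => Sop lam (fun i => f i + t * g i) i - output (A eps) f k i) /\
  l2norm (fun i => Sop lam (fun i => f i + t * g i) i - output (A eps) f k i) <= eps.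
Proof.
  intros HA Heps Hf Hg Hk Hker Hin.
  apply (accurate_on_indistinguishable lam H A eps f _ k HA Heps Hin Hk).
  intros i Hi L EL. destruct (Hker i Hi L EL) as [HL HLg].
  apply (linear_below_add_kernel N); [exact HL|exact Hf| |].
  - intros j Hj. rewrite Hg by exact Hj. ring.
  - rewrite (linear_below_scal N), HLg by assumption. ring.
Qed.

Lemma queried_kernel_direction (lam : nat -> R) (s : strategy) (f : nat -> R)
    (N k : nat) (E : R) :
  (forall i, lam i <> 0) -> 0 < E -> (k < N)%nat ->
  (forall i, (i < k)%nat -> forall L,
     next s (data s f i) = Some L -> linear_below N L) ->
  exists g, supported_below N g /\ l2norm (Sop lam g) = E /\
    forall i, (i < k)%nat -> forall L, next s (data s f i) = Some L -> L g = 0.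
Proof.
  intros Hlam HE Hlt Hquery_lin.
  set (query := fun i => match next s (data s f i) with
                         | Some L => L | None => fun _ => 0 end).
  destruct (common_kernel_nontrivial N (map query (seq 0 k)))
    as [g0 [Hg0 [[i0 Hi0] Hker]]].
  { rewrite length_map, length_seq. exact Hlt. }
  { apply Forall_map, Forall_forall. intros i Hi. apply in_seq in Hi. unfold query.
    destruct (next s (data s f i)) as [L|] eqn:EL.
    - exact (Hquery_lin i (proj2 Hi) L EL).
    - intros x y c _ _. ring. }
  rewrite Forall_map, Forall_forall in Hker.
  set (Sg0 := l2norm (Sop lam g0)).
  assert (HSg0 : 0 < Sg0).
  { apply (l2norm_pos _ i0).
    - apply (l2_supported N). intros i Hi. unfold Sop. rewrite Hg0 by exact Hi. ring.
    - unfold Sop. apply Rmult_integral_contrapositive. auto. }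
  exists (fun i => E / Sg0 * g0 i). split; [|split].
  - intros i Hi. rewrite Hg0 by exact Hi. ring.
  - replace (Sop lam (fun i => E / Sg0 * g0 i)) with (fun i => E / Sg0 * Sop lam g0 i)
      by (apply functional_extensionality; intros; unfold Sop; ring).
    rewrite l2norm_scal, Rabs_pos_eq by (apply Rlt_le, Rdiv_lt_0_compat; lra).
    fold Sg0. field. lra.
  - intros i Hi L EL.
    replace L with (query i) by (unfold query; rewrite EL; reflexivity).
    assert (Hq : linear_below N (query i))
      by (unfold query; rewrite EL; exact (Hquery_lin i Hi L EL)).
    rewrite (linear_below_scal N), Hker by (exact Hq || exact Hg0 || (apply in_seq; lia)).
    ring.
Qed.

Lemma comp_ge_of_perturbations (lam : nat -> R) (H : (nat -> R) -> Prop)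
    (eps rho E : R) (N : nat) (f : nat -> R) :
  (forall i, lam i <> 0) -> 0 < eps -> eps < E ->
  supported_below N f -> l2norm f <= rho ->
  (forall h, supported_below N h -> l2norm (Sop lam h) <= E ->
     H (fun i => f i + h i)) ->
  comp_ge lam H eps rho N.
Proof.
  intros Hlam Heps HE Hf Hrho Hpert.
  assert (Hf_in : H f).
  { pose proof (Hpert (fun _ => 0)) as Hzero. cbv beta in Hzero.
    rewrite (functional_extensionality (fun i => f i + 0) f) in Hzero
      by (intros; ring).
    apply Hzero; [intros i _; reflexivity|].
    replace (Sop lam (fun _ => 0)) with (fun i => 0 * lam i)
      by (apply functional_extensionality; intros; unfold Sop; ring).
    rewrite l2norm_scal, Rabs_R0. lra. }
  intros A HA. exists f.
  split; [exact Hf_in|split; [exact (l2_supported N f Hf)|split; [exact Hrho|]]].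
  intros k Hk. destruct (le_lt_dec N k) as [|Hlt]; [assumption|exfalso].
  destruct (HA eps f Heps Hf_in) as [k' [Hk' [Hblf _]]].
  rewrite (stop_time_unique _ _ _ _ Hk' Hk) in Hblf.
  assert (Hquery_lin : forall i, (i < k)%nat -> forall L,
            next (A eps) (data (A eps) f i) = Some L -> linear_below N L).
  { intros i Hi L EL x y c Hx Hy.
    apply (proj1 (Hblf i Hi L EL)); eapply l2_supported; eauto. }
  destruct (queried_kernel_direction lam (A eps) f N k E Hlam ltac:(lra) Hlt Hquery_lin)
    as [g [Hg [HSg Hker]]].
  assert (Hpm : forall t, Rabs t = 1 ->
    l2 (fun i => Sop lam (fun i => f i + t * g i) i - output (A eps) f k i) /\
    l2norm (fun i => Sop lam (fun i => f i + t * g i) i - output (A eps) f k i) <= eps).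
  { intros t Ht. apply (accurate_on_kernel_shift lam H A eps f g N k t HA Heps Hf Hg Hk).
    - intros i Hi L EL. exact (conj (Hquery_lin i Hi L EL) (Hker i Hi L EL)).
    - apply Hpert; [intros i Hi; rewrite Hg by exact Hi; ring|].
      replace (Sop lam (fun i => t * g i)) with (fun i => t * Sop lam g i)
        by (apply functional_extensionality; intros; unfold Sop; ring).
      rewrite l2norm_scal, Ht, HSg. lra. }
  destruct (Hpm 1 Rabs_R1) as [Hl2p Hp].
  destruct (Hpm (-1) ltac:(rewrite Rabs_left; lra)) as [Hl2m Hm].
  pose proof (l2norm_half_sub _ _ eps Hl2p Hl2m Hp Hm) as Hhalf. cbv beta in Hhalf.
  replace (fun i => (Sop lam (fun i => f i + 1 * g i) i - output (A eps) f k i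
                    - (Sop lam (fun i => f i + -1 * g i) i - output (A eps) f k i)) / 2)
    with (Sop lam g) in Hhalf
    by (apply functional_extensionality; intros; unfold Sop; field).
  lra.
Qed.

Section Spikes.
Variable n : nat -> nat.
Hypothesis n_incr : forall k, (n k < n (S k))%nat.

Lemma n_lt_mono k k' : (k < k')%nat -> (n k < n k')%nat.
Proof.
  induction 1 as [|k' _ IH]; [apply n_incr|]. pose proof (n_incr k'). lia.
Qed.

Lemma n_le_mono k k' : (k <= k')%nat -> (n k <= n k')%nat.
Proof.
  intros H. destruct (Nat.eq_dec k k') as [->|Hne]; [lia|].
  apply Nat.lt_le_incl, n_lt_mono. lia.
Qed.

Fixpoint spikes (c : nat -> R) (J : nat) (i : nat) : R :=
  match J with
  | O => 0
  | S J' => spikes c J' i + if Nat.eq_dec i (n J') then c J' else 0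
  end.

Lemma spikes_off (c : nat -> R) J i :
  (forall k, (k < J)%nat -> i <> n k) -> spikes c J i = 0.
Proof.
  induction J as [|J IH]; intros Hi; simpl; [reflexivity|].
  rewrite IH by (intros k Hk; apply Hi; lia).
  destruct (Nat.eq_dec i (n J)) as [E|]; [exfalso; exact (Hi J (Nat.lt_succ_diag_r J) E)|ring].
Qed.

Lemma spikes_at (c : nat -> R) J k : (k < J)%nat -> spikes c J (n k) = c k.
Proof.
  induction J as [|J IH]; intros Hk; simpl; [lia|].
  destruct (Nat.eq_dec (n k) (n J)) as [E|Hne].
  - assert (k = J).
    { destruct (lt_eq_lt_dec k J) as [[H|H]|H]; auto;
        pose proof (n_lt_mono _ _ H); lia. }
    subst. rewrite spikes_off; [ring|].
    intros k' Hk'. pose proof (n_lt_mono _ _ Hk'). lia.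
  - assert (k <> J) by (intros ->; auto). rewrite IH by lia. ring.
Qed.

Lemma spikes_supported (c : nat -> R) J : supported_below (n J) (spikes c J).
Proof.
  intros i Hi. apply spikes_off. intros k Hk ->. pose proof (n_lt_mono _ _ Hk). lia.
Qed.

Lemma spikes_inside_block (c : nat -> R) J k i :
  (n k < i < n (S k))%nat -> spikes c J i = 0.
Proof.
  intros Hi. apply spikes_off. intros k' _ ->.
  destruct (le_lt_dec k' k) as [H|H].
  - pose proof (n_le_mono _ _ H). lia.
  - pose proof (n_le_mono (S k) k' H). lia.
Qed.

Lemma block_sum_spikes_add (w h c : nat -> R) J k : (k < J)%nat ->
  sum_n_m (fun i => (w i * (spikes c J i + h i)) ^ 2) (n k) (n (S k) - 1) =
  (w (n k) * (c k + h (n k))) ^ 2 +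
  sum_n_m (fun i => (w i * h i) ^ 2) (S (n k)) (n (S k) - 1).
Proof.
  intros Hk. pose proof (n_incr k).
  rewrite sum_Sn_m, spikes_at by (lia || exact Hk).
  change (plus ?x ?y) with (x + y). f_equal.
  apply sum_n_m_ext_loc. intros i Hi.
  rewrite (spikes_inside_block c J k i) by lia. f_equal. ring.
Qed.

Hypothesis n0_pos : (1 <= n 0)%nat.

Lemma sum_n_m_blocks (a : nat -> R) J :
  sum_n_m a 0 (n (S J) - 1) =
  sum_n_m a 0 (n 0 - 1) + sum_n (fun k => sum_n_m a (n k) (n (S k) - 1)) J.
Proof.
  induction J as [|J IH].
  - rewrite sum_O. pose proof (n_incr 0).
    rewrite (sum_n_m_Chasles a 0 (n 0 - 1) (n 1 - 1)) by lia.
    replace (S (n 0 - 1)) with (n 0) by lia. reflexivity.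
  - rewrite sum_Sn, <- Rplus_assoc, <- IH. pose proof (n_incr (S J)).
    pose proof (n_lt_mono 0 (S J) ltac:(lia)).
    rewrite (sum_n_m_Chasles a 0 (n (S J) - 1) (n (S (S J)) - 1)) by lia.
    replace (S (n (S J) - 1)) with (n (S J)) by lia. reflexivity.
Qed.

Lemma l2norm_spikes_sqr (c : nat -> R) J : (1 <= J)%nat ->
  l2norm (spikes c J) ^ 2 = sum_n (fun k => c k ^ 2) (J - 1).
Proof.
  intros HJ.
  rewrite l2norm_sqr by exact (l2_supported _ _ (spikes_supported c J)).
  rewrite (Series_supported (n J)) by
    (intros i Hi; rewrite spikes_supported by exact Hi; ring).
  unfold sum_n. replace (n J) with (n (S (J - 1))) by (f_equal; lia).
  rewrite sum_n_m_blocks.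
  rewrite (sum_n_m_ext_loc _ (fun _ => 0) 0 (n 0 - 1)), sum_n_m_const, Rmult_0_r, Rplus_0_l.
  - apply sum_n_m_ext_loc. intros k Hk.
    rewrite (sum_n_m_ext _ (fun i => (1 * (spikes c J i + 0)) ^ 2))
      by (intros; f_equal; ring).
    rewrite block_sum_spikes_add by lia.
    replace ((1 * 0) ^ 2) with 0 by ring. rewrite sum_n_m_const.
    change (?x = ?y) with (@eq R x y). ring.
  - intros i Hi. change (?x = ?y) with (@eq R x y). rewrite spikes_off; [ring|].
    intros k _ ->. pose proof (n_le_mono 0 k ltac:(lia)). lia.
Qed.

End Spikes.

Lemma pow_le_1 (b : R) (m : nat) : 0 <= b <= 1 -> b ^ m <= 1.
Proof.
  intros Hb. induction m as [|m IH]; simpl; [lra|].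
  pose proof (pow_le b m (proj1 Hb)). nra.
Qed.

Lemma powerRZ_ge_1 (b : R) (z : Z) : 0 < b <= 1 -> (z <= 0)%Z -> 1 <= powerRZ b z.
Proof.
  intros Hb Hz. replace z with (- Z.of_nat (Z.to_nat (- z)))%Z by lia.
  rewrite powerRZ_neg', <- pow_powerRZ, <- Rinv_1.
  apply Rinv_le_contravar; [apply pow_lt; lra|apply pow_le_1; lra].
Qed.

Lemma powerRZ_div_sqr_pos (b x : R) (z : Z) : 0 < b -> 0 < x -> 0 < powerRZ b z / x ^ 2.
Proof. intros Hb Hx. apply Rdiv_lt_0_compat; [apply powerRZ_lt, Hb|apply pow_lt, Hx]. Qed.

Lemma powerRZ_double (b : R) (z : Z) : b <> 0 -> powerRZ b (2 * z) = powerRZ b z ^ 2.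
Proof.
  intros Hb. replace (2 * z)%Z with (z + z)%Z by lia. rewrite powerRZ_add by exact Hb. ring.
Qed.

Lemma sqrt_sqr_shift_bounds (s x Y E : R) :
  0 <= Y -> x ^ 2 + Y <= E ^ 2 -> 0 <= E <= s ->
  s - E <= sqrt ((s + x) ^ 2 + Y) <= s + E.
Proof.
  intros HY Hle HE.
  assert (Hx : - E <= x <= E) by (split; nra).
  split.
  - rewrite <- (sqrt_pow2 (s - E)) by lra. apply sqrt_le_1_alt. nra.
  - rewrite <- (sqrt_pow2 (s + E)) by lra. apply sqrt_le_1_alt. nra.
Qed.

Lemma cone_level_ineq (a D E p q : R) :
  1 < a -> 0 <= E -> (a - 1) * D = (a + 1) * E -> 0 < q <= 1 -> 1 <= q * p ->
  D * (q * p) + E <= a * q * (D * p - E).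
Proof.
  intros ha hE hD hq hqp.
  assert ((a - 1) * D * (q * p) = (a + 1) * E * (q * p)) by (rewrite hD; ring).
  assert (0 <= (a + 1) * E * (q * p - 1)) by (apply Rmult_le_pos; [apply Rmult_le_pos|]; lra).
  assert (0 <= a * E * (1 - q)) by (apply Rmult_le_pos; [apply Rmult_le_pos|]; lra).
  nra.
Qed.

Section FoolingCenter.
Variables (lam : nat -> R) (n : nat -> nat) (a b D E : R) (j : nat).
Hypothesis lam_pos : forall i, 0 < lam i.
Hypothesis n_incr : forall k, (n k < n (S k))%nat.
Hypothesis hb : 0 < b <= 1.
Hypothesis ha : 1 < a.
Hypothesis hE : 0 <= E.
Hypothesis hD : (a - 1) * D = (a + 1) * E.

Definition block_level (K : nat) : R := D * powerRZ b (Z.of_nat K - Z.of_nat j).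

(* coefficient [k] sits at coordinate [n k], the first one of block [k + 1] *)
Definition fooling_center : nat -> R :=
  spikes n (fun k => block_level (S k) / lam (n k)) j.

Lemma block_level_ge_E K : (K <= j)%nat -> E <= block_level K.
Proof.
  intros HK. unfold block_level.
  pose proof (powerRZ_ge_1 b (Z.of_nat K - Z.of_nat j) hb ltac:(lia)).
  assert (E <= D) by nra. nra.
Qed.

Lemma l2norm_fooling_center_sqr_le :
  (forall i, lam (S i) <= lam i) -> (1 <= n 0)%nat -> (1 <= j)%nat ->
  l2norm fooling_center ^ 2 <=
  D ^ 2 * sum_n (fun k => powerRZ b (2 * (Z.of_nat k - Z.of_nat j))
                          / lamN lam n k ^ 2) j.
Proof.
  intros lam_noninc n0_pos hj.
  set (T := fun k => powerRZ b (2 * (Z.of_nat k - Z.of_nat j)) / lamN lam n k ^ 2).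
  assert (HT : forall k, 0 <= T k)
    by (intros k; apply Rlt_le, powerRZ_div_sqr_pos; [lra|apply lam_pos]).
  assert (Hsum : sum_n T j = T 0%nat + sum_n (fun k => T (S k)) (j - 1)).
  { unfold sum_n. rewrite sum_Sn_m, sum_n_m_S by lia.
    replace (S (j - 1)) with j by lia. reflexivity. }
  unfold fooling_center. rewrite l2norm_spikes_sqr by assumption.
  rewrite Hsum, Rmult_plus_distr_l.
  assert (0 <= D ^ 2 * T 0%nat) by (apply Rmult_le_pos; [apply pow2_ge_0|apply HT]).
  enough (sum_n (fun k => (block_level (S k) / lam (n k)) ^ 2) (j - 1)
          <= D ^ 2 * sum_n (fun k => T (S k)) (j - 1)) by lra.
  unfold sum_n.
  replace (D ^ 2 * sum_n_m (fun k => T (S k)) 0 (j - 1))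
    with (sum_n_m (fun k => D ^ 2 * T (S k)) 0 (j - 1))
    by exact (sum_n_m_mult_l (D ^ 2) (fun k => T (S k)) 0 (j - 1)).
  apply sum_n_m_le. intros k.
  assert (Hlam : lamN lam n (S k) <= lam (n k)).
  { unfold lamN. apply decreasing_prop; [exact lam_noninc|]. pose proof (n_incr k). lia. }
  assert (Hlam' : 0 < lamN lam n (S k)) by apply lam_pos.
  pose proof (lam_pos (n k)).
  unfold T, block_level. rewrite powerRZ_double by lra.
  set (p := powerRZ b (Z.of_nat (S k) - Z.of_nat j)).
  replace ((D * p / lam (n k)) ^ 2) with ((D * p) ^ 2 * / lam (n k) ^ 2) by (field; lra).
  replace (D ^ 2 * (p ^ 2 / lamN lam n (S k) ^ 2))
    with ((D * p) ^ 2 * / lamN lam n (S k) ^ 2) by (field; lra).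
  apply Rmult_le_compat_l; [apply pow2_ge_0|].
  apply Rinv_le_contravar; [apply pow_lt; exact Hlam'|apply pow_incr; lra].
Qed.

Section Perturbation.
Variable h : nat -> R.
Hypothesis h_supp : supported_below (n j) h.
Hypothesis h_small : l2norm (Sop lam h) <= E.

Let g := fun i => fooling_center i + h i.

Lemma sigma_perturbed_in K : (1 <= K <= j)%nat ->
  block_level K - E <= Defs.sigma lam n g K <= block_level K + E.
Proof.
  intros HK. destruct K as [|k]; [lia|].
  unfold Defs.sigma, g, fooling_center. replace (S k - 1)%nat with k by lia.
  rewrite block_sum_spikes_add by (exact n_incr || lia).
  replace (lam (n k) * (block_level (S k) / lam (n k) + h (n k)))
    with (block_level (S k) + lam (n k) * h (n k))
    by (field; apply Rgt_not_eq, lam_pos).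
  apply sqrt_sqr_shift_bounds.
  - apply sum_n_m_nonneg. intros; apply pow2_ge_0.
  - pose proof (n_incr k).
    replace (_ ^ 2 + _) with (sum_n_m (fun i => Sop lam h i ^ 2) (n k) (n (S k) - 1))
      by (rewrite sum_Sn_m by lia; reflexivity).
    eapply Rle_trans; [apply sum_n_m_sqr_le_l2norm|apply pow_incr; split;
      [apply sqrt_pos|exact h_small]].
    apply (l2_supported (n j)). intros i Hi. unfold Sop. rewrite h_supp by exact Hi. ring.
  - split; [exact hE|apply block_level_ge_E; lia].
Qed.

Lemma sigma_perturbed_out K : (j < K)%nat -> Defs.sigma lam n g K = 0.
Proof.
  intros HK. unfold Defs.sigma. rewrite <- sqrt_0. f_equal.
  rewrite (sum_n_m_ext_loc _ (fun _ => 0)), sum_n_m_const by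
    (intros i Hi; change (?x = ?y) with (@eq R x y); unfold g, fooling_center;
     pose proof (n_le_mono n n_incr j (K - 1) ltac:(lia));
     rewrite h_supp, spikes_supported by (exact n_incr || lia); ring).
  apply Rmult_0_r.
Qed.

Lemma cone_perturbed : cone lam n a b g.
Proof.
  split.
  - apply (l2_supported (n j)). intros i Hi. unfold g, fooling_center.
    rewrite h_supp, spikes_supported by (exact n_incr || exact Hi). ring.
  - intros K r HK Hr.
    assert (Hq : 0 < b ^ r <= 1) by (split; [apply pow_lt|apply pow_le_1]; lra).
    assert (Hsig : 0 <= Defs.sigma lam n g K) by apply sqrt_pos.
    destruct (le_lt_dec (K + r) j) as [Hle|Hgt].
    2:{ rewrite sigma_perturbed_out by exact Hgt.
        apply Rmult_le_pos; [apply Rmult_le_pos|]; lra. }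
    pose proof (sigma_perturbed_in K ltac:(lia)) as [HK1 _].
    pose proof (sigma_perturbed_in (K + r) ltac:(lia)) as [_ HKr].
    set (p := powerRZ b (Z.of_nat K - Z.of_nat j)).
    assert (Hshift : powerRZ b (Z.of_nat (K + r) - Z.of_nat j) = b ^ r * p).
    { unfold p. rewrite pow_powerRZ, <- powerRZ_add by lra. f_equal. lia. }
    assert (Hge1 : 1 <= b ^ r * p).
    { rewrite <- Hshift. apply powerRZ_ge_1; [exact hb|lia]. }
    unfold block_level in HK1, HKr. fold p in HK1. rewrite Hshift in HKr.
    pose proof (cone_level_ineq a D E p (b ^ r) ha hE hD Hq Hge1).
    assert (a * b ^ r * (D * p - E) <= a * b ^ r * Defs.sigma lam n g K).
    { apply Rmult_le_compat_l; [|lra]. apply Rmult_le_pos; lra. }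
    lra.
Qed.

End Perturbation.
End FoolingCenter.

Lemma comp_ge_cone (lam : nat -> R) (n : nat -> nat) (a b eps rho E : R) (j : nat) :
  (forall i, 0 < lam i) -> (forall i, lam (S i) <= lam i) ->
  (forall k, (n k < n (S k))%nat) -> (1 <= n 0)%nat ->
  0 < b <= 1 -> 1 < a -> (1 <= j)%nat -> 0 < eps -> eps < E -> 0 < rho ->
  E ^ 2 * ((a + 1) ^ 2 / (a - 1) ^ 2) *
    sum_n (fun k => powerRZ b (2 * (Z.of_nat k - Z.of_nat j)) / lamN lam n k ^ 2) j
  <= rho ^ 2 ->
  comp_ge lam (cone lam n a b) eps rho (n j).
Proof.
  intros lam_pos lam_noninc n_incr n0_pos hb ha hj heps hE hrho Hnorm.
  set (D := E * (a + 1) / (a - 1)).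
  assert (HD : (a - 1) * D = (a + 1) * E) by (unfold D; field; lra).
  apply (comp_ge_of_perturbations lam _ eps rho E (n j) (fooling_center lam n b D j)).
  - intros i. apply Rgt_not_eq, lam_pos.
  - exact heps.
  - exact hE.
  - apply spikes_supported, n_incr.
  - apply Rsqr_incr_0_var; [rewrite !Rsqr_pow2|lra].
    eapply Rle_trans; [apply (l2norm_fooling_center_sqr_le lam n b D j lam_pos n_incr hb
                              lam_noninc n0_pos hj)|].
    replace (D ^ 2) with (E ^ 2 * ((a + 1) ^ 2 / (a - 1) ^ 2)) by (unfold D; field; lra).
    exact Hnorm.
  - intros h Hh Hsmall.
    exact (cone_perturbed lam n a b D E j lam_pos n_incr hb ha ltac:(lra) HD h Hh Hsmall).
Qed.

Lemma block_ratio_lub_ge_1 (lam : nat -> R) (n : nat -> nat) (Rsup : R) :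
  (forall i, 0 < lam i) -> (forall i, lam (S i) <= lam i) ->
  (forall k, (n k < n (S k))%nat) ->
  is_lub (fun r => exists k : nat, (1 <= k)%nat /\
                   r = lamN lam n (k - 1) / lamN lam n k) Rsup ->
  1 <= Rsup.
Proof.
  intros lam_pos lam_noninc n_incr [Hub _].
  eapply Rle_trans; [|apply Hub; exists 1%nat; split; [lia|reflexivity]].
  pose proof (lam_pos (n 1 - 1)%nat).
  assert (lamN lam n 1 <= lamN lam n 0).
  { unfold lamN. apply decreasing_prop; [exact lam_noninc|]. pose proof (n_incr 0%nat). lia. }
  apply (Rmult_le_reg_r (lamN lam n 1)); [exact (lam_pos _)|].
  unfold Rdiv. rewrite Rmult_assoc, Rinv_l by (unfold lamN; lra). simpl. lra.
Qed.

Lemma fooling_radius (eps rho P : R) :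
  0 < eps -> 0 < rho -> 0 < P -> P < rho ^ 2 / eps ^ 2 ->
  eps < rho / sqrt P /\ (rho / sqrt P) ^ 2 * P = rho ^ 2.
Proof.
  intros Heps Hrho HP Hlt.
  assert (HsP : 0 < sqrt P) by (apply sqrt_lt_R0, HP).
  assert (Hsq : (rho / sqrt P) ^ 2 * P = rho ^ 2).
  { unfold Rdiv. rewrite Rpow_mult_distr, pow_inv, pow2_sqrt by lra. field. lra. }
  split; [|exact Hsq].
  assert (Hlt' : eps ^ 2 * P < rho ^ 2).
  { apply (Rmult_lt_reg_r (/ eps ^ 2)); [apply Rinv_0_lt_compat, pow_lt, Heps|].
    replace (eps ^ 2 * P * / eps ^ 2) with P by (field; lra). exact Hlt. }
  destruct (Rlt_or_le eps (rho / sqrt P)) as [|Hle]; [assumption|exfalso].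
  assert (0 < rho / sqrt P) by (apply Rdiv_lt_0_compat; lra).
  assert ((rho / sqrt P) ^ 2 * P <= eps ^ 2 * P)
    by (apply Rmult_le_compat_r; [lra|apply pow_incr; lra]).
  lra.
Qed.

Theorem theorem2
  (lam : nat -> R) (n : nat -> nat) (a b : R)
  (lam_pos : forall i, 0 < lam i)
  (lam_noninc : forall i, lam (S i) <= lam i)
  (lam_lim : is_lim_seq lam 0)
  (n_incr : forall k, (n k < n (S k))%nat)
  (n0_ge1 : (1 <= n 0)%nat)
  (hb : 0 < b) (hb1 : b < 1) (ha : 1 < a)
  (Rsup : R)
  (hR : is_lub (fun r => exists k : nat, (1 <= k)%nat /\
                   r = lamN lam n (k - 1) / lamN lam n k) Rsup)
  (eps rho : R) (heps : 0 < eps) (hrho : 0 < rho)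
  (j : nat) (hj : (1 <= j)%nat)
  (hcond : ((a + 1) ^ 2 * Rsup ^ 2 / (a - 1) ^ 2 + 1) *
           sum_n (fun k => powerRZ b (2 * (Z.of_nat k - Z.of_nat j))
                            / (lamN lam n k) ^ 2) j
           < rho ^ 2 / eps ^ 2) :
  comp_ge lam (cone lam n a b) eps rho (n j).
Proof.
  pose proof (block_ratio_lub_ge_1 lam n Rsup lam_pos lam_noninc n_incr hR) as HR1.
  set (S0 := sum_n _ j) in hcond.
  assert (HS0 : 0 < S0).
  { apply sum_n_pos_of_first; [intros k; apply Rlt_le|];
      apply powerRZ_div_sqr_pos; first [exact hb|apply lam_pos]. }
  set (C := (a + 1) ^ 2 / (a - 1) ^ 2).
  assert (HC : 0 <= C) by (apply Rle_mult_inv_pos; [apply pow2_ge_0|apply pow_lt; lra]).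
  set (K0 := (a + 1) ^ 2 * Rsup ^ 2 / (a - 1) ^ 2 + 1) in hcond.
  assert (HK0 : C + 1 <= K0).
  { replace K0 with (C * Rsup ^ 2 + 1) by (unfold K0, C; field; lra).
    assert (C * 1 <= C * Rsup ^ 2) by (apply Rmult_le_compat_l; nra).
    lra. }
  destruct (fooling_radius eps rho (K0 * S0) heps hrho
              ltac:(apply Rmult_lt_0_compat; lra) hcond) as [HE HE2].
  apply (comp_ge_cone lam n a b eps rho (rho / sqrt (K0 * S0)) j); auto; [lra|].
  fold S0 C. rewrite <- HE2, Rmult_assoc.
  apply Rmult_le_compat_l; [apply pow2_ge_0|].
  apply Rmult_le_compat_r; lra.
Qed.
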